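(* Let $R$ be an integral domain, $M$ an $R$-module, and $d$ an integer-valued metric on $M$. Then the function $\Delta:\mathbb{P}^*(M)\times\mathbb{P}^*(M)\to\mathbb{Z}$ is a metric on $\mathbb{P}^*(M)$.
   Context: Let $M^\circ=M\setminus\{0\}$; define $x\sim'y$ on $M^\circ$ if there exist $m\in M$ and $r,s\in R$ with $x=rm$, $y=sm$; let $\sim$ be the equivalence relation generated by $\sim'$; $\mathbb{P}(M)=M^\circ/\sim$, and $\mathbb{P}^*(M)=\{*\}\sqcup\mathbb{P}(M)$, where $*$ is the class consisting of $0\in M$ alone. For classes $[x],[y]\in\mathbb{P}^*(M)$ set $\delta([x],[y])=\inf\{d(x',y'): x'\in[x],\ y'\in[y]\}$, and $\Delta([x],[y])=\min\{\delta([x_0],[x_1])+\delta([x_1],[x_2])+\cdots+\delta([x_{n-1}],[x_n])\}$, the minimum over all finite sequences of classes with $[x_0]=[x]$ and $[x_n]=[y]$. *)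

From HB Require Import structures.
From mathcomp Require Import all_boot all_order all_algebra.
From Stdlib Require Import Relation_Operators ClassicalEpsilon.
Set Implicit Arguments. Unset Strict Implicit. Unset Printing Implicit Defensive.
Import Order.TTheory GRing.Theory Num.Theory.
Local Open Scope ring_scope.

(* Least natural number satisfying P (the minimum / infimum of a nonempty
   set of naturals); an arbitrary value if P is empty. *)
Definition natmin (P : nat -> Prop) : nat :=
  epsilon (inhabits 0%N) (fun n => P n /\ forall m, P m -> (n <= m)%N).

Definition is_metric (T : Type) (d : T -> T -> int) : Prop :=
  [/\ forall x y, 0 <= d x y,
      forall x y, d x y = 0 <-> x = y,
      forall x y, d x y = d y x
    & forall x y z, d x z <= d x y + d y z].

(* a pseudo-metric on T whose zero set is exactly the equivalence E:
   this is exactly a metric on the quotient T / E (together with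
   compatibility of the function with E). *)
Definition is_metric_mod (T : Type) (E : T -> T -> Prop) (D : T -> T -> int) : Prop :=
  [/\ forall x y, 0 <= D x y,
      forall x y, D x y = 0 <-> E x y,
      forall x y, D x y = D y x
    & forall x y z, D x z <= D x y + D y z].

Section Proj.
Variables (R : idomainType) (M : lmodType R).

Definition simp (x y : M) : Prop :=
  x != 0 /\ y != 0 /\ exists (m : M) (r s : R), x = r *: m /\ y = s *: m.

(* the equivalence relation on M whose classes are the points of P*(M):
   the equivalence generated by ~' on M°, plus the singleton class {0} = * *)
Definition pcls (x y : M) : Prop := clos_refl_sym_trans M simp x y.

Variable d : M -> M -> int.

Definition pdelta (x y : M) : int :=
  (natmin (fun n => exists x' y', pcls x x' /\ pcls y y' /\ d x' y' = n%:Z))%:Z.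

Definition chain_cost (x0 : M) (s : seq M) : int :=
  \sum_(p <- zip (x0 :: s) s) pdelta p.1 p.2.

Definition pDelta (x y : M) : int :=
  (natmin (fun n => exists (x0 : M) (s : seq M),
     pcls x x0 /\ pcls y (last x0 s) /\ chain_cost x0 s = n%:Z))%:Z.

End Proj.

(* The
   endpoints of a chain are only fixed up to class, so Delta is a function of
   classes; so is delta, which lets two chains meeting in a common class be
   concatenated (triangle inequality), while reversing a chain gives symmetry
   because d is symmetric.  Both infima range over naturals, hence are
   attained: a chain of cost 0 has only steps with delta = 0, each realised by
   representatives at d-distance 0, i.e. equal, so the chain never leaves its
   class. *)

From HB Require Import structures.
From mathcomp Require Import all_boot all_order all_algebra.
From Stdlib Require Import Relation_Operators ClassicalEpsilon.
Import Order.TTheory GRing.Theory Num.Theory.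
Local Open Scope ring_scope.
Set Implicit Arguments. Unset Strict Implicit. Unset Printing Implicit Defensive.

Lemma natminP (P : nat -> Prop) : (exists n, P n) ->
  P (natmin P) /\ forall m, P m -> (natmin P <= m)%N.
Proof.
move=> [n Pn].
apply: (epsilon_spec (inhabits 0%N) (fun m => P m /\ forall k, P k -> (m <= k)%N)).
pose p n := if excluded_middle_informative (P n) then true else false.
have pP m : reflect (P m) (p m) by rewrite /p; case: excluded_middle_informative; constructor.
have [m /pP Pm min_m] := ex_minnP (ex_intro p n (introT (pP n) Pn)).
by exists m; split=> // k /pP; apply: min_m.
Qed.

Lemma natmin_le (P : nat -> Prop) n : P n -> (natmin P <= n)%N.
Proof. by move=> Pn; apply: (natminP (ex_intro P n Pn)).2. Qed.

Section ProjectiveMetric.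
Variables (R : idomainType) (M : lmodType R) (d : M -> M -> int).

Lemma pcls_refl (x : M) : pcls x x.
Proof. exact: rst_refl. Qed.

Lemma pcls_sym (x y : M) : pcls x y -> pcls y x.
Proof. exact: rst_sym. Qed.

Lemma pcls_trans (x y z : M) : pcls x y -> pcls y z -> pcls x z.
Proof. exact: rst_trans. Qed.

Lemma chain_cost_nil (x0 : M) : chain_cost d x0 [::] = 0.
Proof. by rewrite /chain_cost big_nil. Qed.

Lemma chain_cost_cons (x0 x1 : M) s :
  chain_cost d x0 (x1 :: s) = pdelta d x0 x1 + chain_cost d x1 s.
Proof. by rewrite /chain_cost big_cons. Qed.

Lemma chain_cost_cat (x0 : M) s t :
  chain_cost d x0 (s ++ t) = chain_cost d x0 s + chain_cost d (last x0 s) t.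
Proof.
elim: s x0 => [|x1 s IHs] x0; first by rewrite chain_cost_nil add0r.
by rewrite cat_cons !chain_cost_cons IHs addrA.
Qed.

Lemma pDelta_attained (x y : M) : exists x0 s,
  [/\ pcls x x0, pcls y (last x0 s) & chain_cost d x0 s = pDelta d x y].
Proof.
have witness : exists n : nat, exists x0 s,
    pcls x x0 /\ pcls y (last x0 s) /\ chain_cost d x0 s = n.
  by exists `|chain_cost d x [:: y]|%N, x, [:: y]; rewrite gez0_abs ?sumr_ge0;
    do !split; apply: pcls_refl.
have [[x0 [s [xx0 [ys sE]]]] _] := natminP witness.
by exists x0, s; split.
Qed.

Lemma pDelta_le (x y x0 : M) s :
  pcls x x0 -> pcls y (last x0 s) -> pDelta d x y <= chain_cost d x0 s.
Proof.
have cost_ge0 : 0 <= chain_cost d x0 s by apply: sumr_ge0.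
move=> xx0 ys; rewrite -(gez0_abs cost_ge0) lez_nat.
by apply: natmin_le; exists x0, s; rewrite gez0_abs.
Qed.

Lemma pDelta_pcls (x x' y y' : M) :
  pcls x x' -> pcls y y' -> pDelta d x y = pDelta d x' y'.
Proof.
suff le_pDelta a a' b b' : pcls a a' -> pcls b b' -> pDelta d a' b' <= pDelta d a b.
  by move=> xx' yy'; apply: le_anti; rewrite !le_pDelta //; apply: pcls_sym.
move=> aa' bb'; have [a0 [s [aa0 bs <-]]] := pDelta_attained a b.
by apply: pDelta_le; apply: pcls_trans (pcls_sym _) _; eassumption.
Qed.

Lemma pDelta_pcls0 (x y : M) : pcls x y -> pDelta d x y = 0.
Proof.
move=> xy; have : pDelta d x y <= chain_cost d x [::].
  by apply: pDelta_le; [apply: pcls_refl | apply: pcls_sym].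
by rewrite chain_cost_nil => le0; apply: le_anti; rewrite le0.
Qed.

Hypothesis d_ge0 : forall x y, 0 <= d x y.

Lemma pdelta_attained (x y : M) :
  exists x' y', [/\ pcls x x', pcls y y' & d x' y' = pdelta d x y].
Proof.
have witness : exists n : nat, exists x' y', pcls x x' /\ pcls y y' /\ d x' y' = n.
  by exists `|d x y|%N, x, y; rewrite gez0_abs ?d_ge0; do !split; apply: pcls_refl.
have [[x' [y' [xx' [yy' dE]]]] _] := natminP witness.
by exists x', y'; split.
Qed.

Lemma pdelta_le (x y x' y' : M) : pcls x x' -> pcls y y' -> pdelta d x y <= d x' y'.
Proof.
move=> xx' yy'; rewrite -(gez0_abs (d_ge0 x' y')) lez_nat.
by apply: natmin_le; exists x', y'; rewrite gez0_abs.
Qed.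

Lemma pdelta_pcls (x x' y y' : M) :
  pcls x x' -> pcls y y' -> pdelta d x y = pdelta d x' y'.
Proof.
suff le_pdelta a a' b b' : pcls a a' -> pcls b b' -> pdelta d a' b' <= pdelta d a b.
  by move=> xx' yy'; apply: le_anti; rewrite !le_pdelta //; apply: pcls_sym.
move=> aa' bb'; have [a0 [b0 [aa0 bb0 <-]]] := pdelta_attained a b.
by apply: pdelta_le; apply: pcls_trans (pcls_sym _) _; eassumption.
Qed.

Lemma chain_cost_pcls (x0 x1 : M) s :
  pcls x0 x1 -> chain_cost d x0 s = chain_cost d x1 s.
Proof.
case: s => [//|y s] x01.
by rewrite !chain_cost_cons (pdelta_pcls x01 (pcls_refl y)).
Qed.

Lemma pDelta_triangle (x y z : M) : pDelta d x z <= pDelta d x y + pDelta d y z.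
Proof.
have [x0 [s [xx0 ys <-]]] := pDelta_attained x y.
have [y0 [t [yy0 zt <-]]] := pDelta_attained y z.
have s_y0 : pcls (last x0 s) y0 by apply: pcls_trans (pcls_sym ys) yy0.
rewrite -(chain_cost_pcls t s_y0) -chain_cost_cat.
apply: pDelta_le; rewrite // last_cat.
by case: t zt => [|? ?] //= zy0; apply: pcls_trans zy0 (pcls_sym s_y0).
Qed.

Hypothesis d_sym : forall x y, d x y = d y x.

Lemma pdeltaC (x y : M) : pdelta d x y = pdelta d y x.
Proof.
suff le_pdeltaC a b : pdelta d b a <= pdelta d a b by apply: le_anti; rewrite !le_pdeltaC.
have [a0 [b0 [aa0 bb0 <-]]] := pdelta_attained a b.
by rewrite d_sym; apply: pdelta_le.
Qed.

Lemma chain_cost_rev (x0 : M) s :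
  chain_cost d (last x0 s) (rev (belast x0 s)) = chain_cost d x0 s /\
  last (last x0 s) (rev (belast x0 s)) = x0.
Proof.
elim: s x0 => [|x1 s IHs] x0 //; have [costE lastE] := IHs x1.
rewrite rev_cons -cats1 chain_cost_cat chain_cost_cons last_cat /= lastE costE.
by rewrite chain_cost_nil addr0 pdeltaC addrC -chain_cost_cons.
Qed.

Lemma pDeltaC (x y : M) : pDelta d x y = pDelta d y x.
Proof.
suff le_pDeltaC a b : pDelta d b a <= pDelta d a b by apply: le_anti; rewrite !le_pDeltaC.
have [a0 [s [aa0 bs <-]]] := pDelta_attained a b.
have [<- lastE] := chain_cost_rev a0 s.
by apply: pDelta_le; rewrite ?lastE.
Qed.

Hypothesis d_eq0 : forall x y, d x y = 0 -> x = y.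

Lemma pdelta_eq0 (x y : M) : pdelta d x y = 0 -> pcls x y.
Proof.
have [x' [y' [xx' yy' <-]]] := pdelta_attained x y.
by move/d_eq0 => eq_x'y'; rewrite -eq_x'y' in yy'; apply: pcls_trans xx' (pcls_sym yy').
Qed.

Lemma chain_cost_eq0 (x0 : M) s : chain_cost d x0 s = 0 -> pcls x0 (last x0 s).
Proof.
elim: s x0 => [|x1 s IHs] x0 /=; first by move=> _; apply: pcls_refl.
rewrite chain_cost_cons => /eqP; rewrite paddr_eq0 ?sumr_ge0 // => /andP[/eqP step0 /eqP rest0].
by apply: pcls_trans (pdelta_eq0 step0) (IHs _ rest0).
Qed.

Lemma pDelta_eq0 (x y : M) : pDelta d x y = 0 -> pcls x y.
Proof.
have [x0 [s [xx0 ys <-]]] := pDelta_attained x y.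
by move/chain_cost_eq0 => x0s; apply: pcls_trans xx0 (pcls_trans x0s (pcls_sym ys)).
Qed.

End ProjectiveMetric.

Theorem theorem5p2 (R : idomainType) (M : lmodType R) (d : M -> M -> int) :
  is_metric d ->
  (forall x x' y y' : M, pcls x x' -> pcls y y' -> pDelta d x y = pDelta d x' y') /\
  is_metric_mod (@pcls R M) (pDelta d).
Proof.
case=> d_ge0 d_eq0 d_sym _.
have d_eq0_eq x y : d x y = 0 -> x = y by move/d_eq0.
split; first exact: pDelta_pcls.
split=> // x y.
- by split=> [/(pDelta_eq0 d_ge0 d_eq0_eq) | /pDelta_pcls0].
- exact: pDeltaC d_ge0 d_sym x y.
- exact: pDelta_triangle d_ge0 x y.
Qed.
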